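(* Consider Primal Online Balanced Descent with parameter $\beta>0$, $\ell_2$ norm $\|\cdot\|=\|\cdot\|_2$ and Euclidean projection, at round $t$, producing $x_t$ from $x_{t-1}$ and cost function $f_t$ with minimizer $v_t$. Let $x_t^*\in\mathcal{X}$ be a point with $H_t^*=f_t(x_t^* )<H_t=f_t(x_t)$, and suppose $f_t(x)\ge\alpha\|x-v_t\|$ for all $x$, where $\alpha>0$. Then $$\|x_t-x_t^*\|-\|x_t^*-x_{t-1}\|\le-\gamma\|x_t-x_{t-1}\|,\qquad\text{where }\gamma=\sqrt{1+\left(\tfrac{2}{\alpha\beta}\right)^2}-\tfrac{2}{\alpha\beta}.$$
   Context: Primal Online Balanced Descent with parameter $\beta>0$ (norm $\|\cdot\|$, mirror map $\Phi$; here $\Phi(x)=\frac12\|x\|_2^2$): given $x_{t-1}$ and convex $f_t$, let $v_t=\arg\min_x f_t(x)$; if $\|x_{t-1}-v_t\|<\beta f_t(v_t)$ set $x_t=v_t$; otherwise, with $K^l_t=\{x:f_t(x)\le l\}$ and $x(l)=\Pi^\Phi_{K^l_t}(x_{t-1})$, where $\Pi^\Phi_K(x)=\arg\min_{y\in K}D_\Phi(y,x)$ and $D_\Phi(x,y)=\Phi(x)-\Phi(y)-\nabla\Phi(y)^T(x-y)$, increase $l$ until $\|x(l)-x_{t-1}\|=\beta l$ and set $x_t=x(l)$. *)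

From HB Require Import structures.
From mathcomp Require Import all_boot all_order all_algebra.
From mathcomp Require Import reals.
Set Implicit Arguments. Unset Strict Implicit. Unset Printing Implicit Defensive.
Import Order.TTheory GRing.Theory Num.Theory.
Local Open Scope ring_scope.

Section POBD.
Variables (R : realType) (n : nat).
Notation vec := 'rV[R]_n.

Definition dotp (x y : vec) : R := \sum_(i < n) x 0 i * y 0 i.
Definition l2norm (x : vec) : R := Num.sqrt (dotp x x).

Definition convex_fun (f : vec -> R) : Prop :=
  forall (x y : vec) (s : R), 0 <= s -> s <= 1 ->
    f (s *: x + (1 - s) *: y) <= s * f x + (1 - s) * f y.

Definition Phi (x : vec) : R := 2^-1 * dotp x x.
Definition gradPhi (x : vec) : vec := x.
Definition bregman (x y : vec) : R := Phi x - Phi y - dotp (gradPhi y) (x - y).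

Definition sublevel (f : vec -> R) (l : R) (x : vec) : Prop := f x <= l.

Definition is_bregman_proj (K : vec -> Prop) (x p : vec) : Prop :=
  K p /\ forall y, K y -> bregman p x <= bregman y x.

Definition is_minimizer (f : vec -> R) (v : vec) : Prop :=
  forall x, f v <= f x.

Definition pobd_step (beta : R) (f : vec -> R) (v x_prev x_next : vec) : Prop :=
  (l2norm (x_prev - v) < beta * f v /\ x_next = v) \/
  (beta * f v <= l2norm (x_prev - v) /\
   exists l : R, f v <= l /\
     is_bregman_proj (sublevel f l) x_prev x_next /\
     l2norm (x_next - x_prev) = beta * l).

End POBD.

(* The sublevel set K = {f <= l} onto which x_prev is projected is convex and
   contains x_star, so the projection inequality makes the angle at x_t of the
   triangle x_prev, x_t, x_star obtuse:
   ||x_star - x_prev||^2 >= ||x_t - x_star||^2 + ||x_t - x_prev||^2.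
   The growth condition gives ||x_t - x_star|| <= (f x_t + f x_star) / alpha
   <= 2 l / alpha = k ||x_t - x_prev|| with k = 2 / (alpha beta), because
   ||x_t - x_prev|| = beta l.  Finally, for 0 <= a <= k d one has
   sqrt (a^2 + d^2) >= a + (sqrt (1 + k^2) - k) d. *)

From HB Require Import structures.
From mathcomp Require Import all_boot all_order all_algebra.
From mathcomp Require Import reals.
From mathcomp Require Import ring lra.
Import Order.TTheory GRing.Theory Num.Theory.
Local Open Scope ring_scope.

Set Implicit Arguments.
Unset Strict Implicit.

Section EuclideanGeometry.
Variables (R : realType) (n : nat).
Implicit Types (x y z p q : 'rV[R]_n).

Lemma dotpC x y : dotp x y = dotp y x.
Proof. by apply: eq_bigr => i _; rewrite mulrC. Qed.

Lemma dotp0l y : dotp 0 y = 0.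
Proof. by apply: big1 => i _; rewrite mxE mul0r. Qed.

Lemma dotpDl x y z : dotp (x + y) z = dotp x z + dotp y z.
Proof. by rewrite /dotp -big_split; apply: eq_bigr => i _; rewrite mxE mulrDl. Qed.

Lemma dotpNl x z : dotp (- x) z = - dotp x z.
Proof. by rewrite /dotp -sumrN; apply: eq_bigr => i _; rewrite mxE mulNr. Qed.

Lemma dotpZl a x z : dotp (a *: x) z = a * dotp x z.
Proof. by rewrite /dotp mulr_sumr; apply: eq_bigr => i _; rewrite mxE mulrA. Qed.

Lemma dotpBl x y z : dotp (x - y) z = dotp x z - dotp y z.
Proof. by rewrite dotpDl dotpNl. Qed.

Lemma dotpBr x y z : dotp z (x - y) = dotp z x - dotp z y.
Proof. by rewrite dotpC dotpBl !(dotpC z). Qed.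

Lemma dotpZr a x z : dotp z (a *: x) = a * dotp z x.
Proof. by rewrite dotpC dotpZl dotpC. Qed.

Lemma dotp_ge0 x : 0 <= dotp x x.
Proof. by apply: sumr_ge0 => i _; rewrite -expr2 sqr_ge0. Qed.

Lemma dotp_eq0 x : (dotp x x == 0) = (x == 0).
Proof.
apply/eqP/eqP => [x0|->]; last exact: dotp0l.
apply/rowP => i; rewrite mxE; apply/eqP; rewrite -sqrf_eq0 expr2; apply/eqP.
by apply: (psumr_eq0P _ x0) => // j _; rewrite -expr2 sqr_ge0.
Qed.

Lemma dotp_gt0 x : (0 < dotp x x) = (x != 0).
Proof. by rewrite lt0r dotp_eq0 dotp_ge0 andbT. Qed.

Lemma l2norm_ge0 x : 0 <= l2norm x.
Proof. exact: sqrtr_ge0. Qed.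

Lemma l2norm_gt0 x : (0 < l2norm x) = (x != 0).
Proof. by rewrite sqrtr_gt0 dotp_gt0. Qed.

Lemma sqr_l2norm x : l2norm x ^+ 2 = dotp x x.
Proof. by rewrite sqr_sqrtr // dotp_ge0. Qed.

Lemma l2normN x : l2norm (- x) = l2norm x.
Proof. by rewrite /l2norm dotpNl dotpC dotpNl opprK. Qed.

Lemma dotp_le_l2norm p q : dotp p q <= l2norm p * l2norm q.
Proof.
have [->|p0] := eqVneq p 0; first by rewrite dotp0l mulr_ge0 ?l2norm_ge0.
have [->|q0] := eqVneq q 0; first by rewrite dotpC dotp0l mulr_ge0 ?l2norm_ge0.
have PQ : 0 < l2norm p * l2norm q by rewrite mulr_gt0 ?l2norm_gt0.
have := dotp_ge0 (l2norm q *: p - l2norm p *: q).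
rewrite !(dotpBl, dotpBr, dotpZl, dotpZr) (dotpC q p) -!sqr_l2norm.
nra.
Qed.

Lemma l2normD_le p q : l2norm (p + q) <= l2norm p + l2norm q.
Proof.
rewrite -ler_sqr ?nnegrE ?addr_ge0 ?l2norm_ge0 // sqr_l2norm.
rewrite !dotpDl !(dotpC _ (p + q)) !dotpDl (dotpC q p) -!sqr_l2norm.
have := dotp_le_l2norm p q; lra.
Qed.

Lemma l2normB_le p q : l2norm (p - q) <= l2norm p + l2norm q.
Proof. by rewrite -(l2normN q) l2normD_le. Qed.

Lemma dotpBB x y : dotp (x - y) (x - y) = dotp x x - 2 * dotp x y + dotp y y.
Proof. rewrite !(dotpBl, dotpBr) (dotpC y x); ring. Qed.

Lemma bregmanE x y : bregman x y = 2^-1 * dotp (x - y) (x - y).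
Proof. by rewrite /bregman /Phi /gradPhi dotpBB !dotpBr (dotpC y x); field. Qed.

Definition convex_set (K : 'rV[R]_n -> Prop) : Prop :=
  forall x y (s : R), 0 <= s -> s <= 1 -> K x -> K y -> K (s *: x + (1 - s) *: y).

Lemma sublevel_convex (f : 'rV[R]_n -> R) (l : R) :
  convex_fun f -> convex_set (sublevel f l).
Proof.
rewrite /sublevel => fconv x y s s0 s1 fx fy.
apply: le_trans (fconv _ _ _ s0 s1) _; nra.
Qed.

Lemma bregman_proj_obtuse (K : 'rV[R]_n -> Prop) x p y :
  convex_set K -> is_bregman_proj K x p -> K y -> dotp (p - x) (p - y) <= 0.
Proof.
move=> Kconv [Kp pmin] Ky; rewrite leNgt; apply/negP => m_gt0.
set m := dotp (p - x) (p - y) in m_gt0; set U := dotp (p - y) (p - y).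
have U_ge0 : 0 <= U := dotp_ge0 _.
have Um_gt0 : 0 < U + m by lra.
(* for this s in (0, 1], the point p - s (p - y) of K would be strictly closer to x than p *)
set s := m / (U + m).
have sUm : s * (U + m) = m by rewrite mulfVK ?gt_eqF.
have s_gt0 : 0 < s by rewrite divr_gt0.
have s_le1 : s <= 1 by rewrite ler_pdivrMr // mul1r; lra.
have := pmin _ (Kconv _ _ _ (ltW s_gt0) s_le1 Ky Kp); rewrite !bregmanE.
have -> : s *: y + (1 - s) *: p - x = (p - x) - s *: (p - y).
  by apply/rowP => i; rewrite !mxE; ring.
rewrite !dotpBB !(dotpZl, dotpZr) -/m -/U => h.
have : 2 * m <= s * U by nra.
nra.
Qed.

Lemma l2norm_obtuse x p y : dotp (p - x) (p - y) <= 0 ->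
  l2norm (p - y) ^+ 2 + l2norm (p - x) ^+ 2 <= l2norm (y - x) ^+ 2.
Proof.
have -> : y - x = (p - x) - (p - y) by rewrite opprB [RHS]addrC subrKA.
rewrite !sqr_l2norm (dotpBB (p - x)); lra.
Qed.

End EuclideanGeometry.

Lemma sqrt_sumsqr_ge (R : rcfType) (k a d : R) :
  0 <= k -> 0 <= a -> 0 <= d -> a <= k * d ->
  a + (Num.sqrt (1 + k ^+ 2) - k) * d <= Num.sqrt (a ^+ 2 + d ^+ 2).
Proof.
move=> k0 a0 d0 akd.
set g := Num.sqrt (1 + k ^+ 2) - k.
have g_ge0 : 0 <= g.
  by rewrite subr_ge0 -ler_sqr ?nnegrE ?sqrtr_ge0 // sqr_sqrtr ?lerDr ?addr_ge0 ?sqr_ge0.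
have gk : g ^+ 2 + 2 * k * g = 1.
  by rewrite /g sqrrB sqr_sqrtr ?addr_ge0 ?sqr_ge0 //; ring.
rewrite -ler_sqr ?nnegrE ?sqrtr_ge0 ?addr_ge0 ?mulr_ge0 // sqr_sqrtr ?addr_ge0 ?sqr_ge0 //.
have : 0 <= g * d * (k * d - a) by apply/mulr_ge0; [exact/mulr_ge0 | rewrite subr_ge0].
nra.
Qed.

Theorem lemma13 (R : realType) (n : nat) (alpha beta : R)
  (f : 'rV[R]_n -> R) (v x_prev x_t x_star : 'rV[R]_n) :
  0 < alpha -> 0 < beta ->
  convex_fun f ->
  is_minimizer f v ->
  (forall x, alpha * l2norm (x - v) <= f x) ->
  pobd_step beta f v x_prev x_t ->
  f x_star < f x_t ->
  l2norm (x_t - x_star) - l2norm (x_star - x_prev) <=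
    - (Num.sqrt (1 + (2 / (alpha * beta)) ^+ 2) - 2 / (alpha * beta))
      * l2norm (x_t - x_prev).
Proof.
move=> alpha_gt0 beta_gt0 fconv vmin growth
  [[_ ->]|[_ [l [_ [proj step_len]]]]] f_lt; first by rewrite ltNge vmin in f_lt.
have Kt : f x_t <= l by case: proj.
have Kstar : sublevel f l x_star by rewrite /sublevel; lra.
have pyth := l2norm_obtuse (bregman_proj_obtuse (sublevel_convex fconv) proj Kstar).
have near_star : alpha * l2norm (x_t - x_star) <= 2 * l.
  have -> : x_t - x_star = (x_t - v) - (x_star - v) by rewrite opprB subrKA.
  have := l2normB_le (x_t - v) (x_star - v).
  have := growth x_t; have := growth x_star; nra.
set k := 2 / (alpha * beta).
have near_k : l2norm (x_t - x_star) <= k * l2norm (x_t - x_prev).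
  rewrite step_len (_ : k * (beta * l) = 2 * l / alpha).
    by rewrite ler_pdivlMr // mulrC.
  by rewrite /k; field; rewrite !gt_eqF.
have k_gt0 : 0 < k by rewrite divr_gt0 ?mulr_gt0.
rewrite -ler_sqrt ?sqr_ge0 // sqrtr_sqr ger0_norm ?l2norm_ge0 // in pyth.
have := le_trans (sqrt_sumsqr_ge (ltW k_gt0) (l2norm_ge0 _) (l2norm_ge0 _) near_k) pyth.
lra.
Qed.
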